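(* Let $d\ge1$, $\alpha_i\in(0,1/i]$ for all $i\in[d+1]$, $P=\mathbb Z_{\ge0}^{d+1}$, and let $t>\exp^{(5d+4)}(1)$ be an integer. Fix reals $a_u$ ($u\in L_t$) and extend them by $a_v:=\sum_{u\in L_t}p(v\to u)a_u$ for $v\in L_m$, $0\le m\le t$. For $j\in[d+1]$ let $\lambda_j:=\lfloor\log^{(2d+2-2j)}(t)\rfloor$ and for $i\in[d+1]$ let $S_j^{\ge i}$ be the set of elements of $L_{\lambda_j}$ with at least $i$ positive entries. Then for all $i,j_1,j_2\in[d+1]$ with $j_1<j_2$, $$\sum_{u\in S_{j_1}^{\ge i}}|a_u|\le\sum_{u\in S_{j_2}^{\ge i}}|a_u|.$$
   Context: Finite model: $P=\mathbb{Z}_{\ge0}^{d+1}$ with $u\le v$ iff $v-u\in\mathbb{Z}_{\ge0}^{d+1}$; $L_t$ = tuples with coordinate sum $t$; $\mathfrak p(v)$ = set of elements covered by $v$, so $|\mathfrak p(v)|$ is the number of positive coordinates of $v$. Path weights: each covering pair $u\lessdot v$ gives a directed edge $u\to v$ of weight $\alpha_{|\mathfrak p(v)|}$; $p(u\to v)$ is the sum over all directed paths from $u$ to $v$ of the product of edge weights, with $p(v\to v)=1$ and $p(u\to v)=0$ if $u\not\le v$. Notation: $\log^{(k)}$ and $\exp^{(k)}$ denote $k$-fold iterates ($\log^{(0)}$ is the identity). *)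

From HB Require Import structures.
From mathcomp Require Import all_boot all_order all_algebra.
From mathcomp Require Import all_classical all_reals all_analysis.
Set Implicit Arguments. Unset Strict Implicit. Unset Printing Implicit Defensive.
Import Order.TTheory GRing.Theory Num.Theory.
Local Open Scope ring_scope.

Definition pt (d : nat) := {ffun 'I_d.+1 -> nat}.

Definition ptsum d (v : pt d) : nat := (\sum_(k < d.+1) v k)%N.

Definition npos d (v : pt d) : nat := #|[set k | (0 < v k)%N]|.

(* L_m as an (duplicate-free) enumeration *)
Definition ptof d m (f : {ffun 'I_d.+1 -> 'I_m.+1}) : pt d :=
  [ffun k => nat_of_ord (f k)].

Definition level (d m : nat) : seq (pt d) :=
  map (@ptof d m)
    [seq f : {ffun 'I_d.+1 -> 'I_m.+1} <- enum {: {ffun 'I_d.+1 -> 'I_m.+1}} |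
       (\sum_(k < d.+1) nat_of_ord (f k))%N == m].

Definition step d (u : pt d) (k : 'I_d.+1) : pt d :=
  [ffun i => (u i + (i == k))%N].

Definition walk d (u : pt d) (s : seq 'I_d.+1) : pt d := foldl (@step d) u s.

Definition pathw (R : nzRingType) d (alpha : nat -> R) (u : pt d) (s : seq 'I_d.+1) : R :=
  \prod_(i < size s) alpha (npos (walk u (take i.+1 s))).

(* p(u -> v): sum over all directed paths from u to v (a path is determined by its
   sequence of steps, whose length is necessarily ptsum v - ptsum u);
   gives 1 when u = v and 0 when u is not <= v *)
Definition pw (R : nzRingType) d (alpha : nat -> R) (u v : pt d) : R :=
  \sum_(s : (ptsum v - ptsum u).-tuple 'I_d.+1 | walk u s == v) pathw alpha u s.

Definition ext (R : nzRingType) d (alpha : nat -> R) (t : nat) (a : pt d -> R) (v : pt d) : R :=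
  \sum_(u <- level d t) pw alpha v u * a u.

Definition lam (R : realType) (d t j : nat) : nat :=
  Num.truncn (iter (2 * d + 2 - 2 * j) (@ln R) (t%:R)).

From HB Require Import structures.
From mathcomp Require Import all_boot all_order all_algebra.
From mathcomp Require Import all_classical all_reals all_analysis.
Set Implicit Arguments. Unset Strict Implicit. Unset Printing Implicit Defensive.
Import Order.TTheory GRing.Theory Num.Theory.
Local Open Scope ring_scope.

(* Indeed [a_v = \sum_k alpha_{|p(v+e_k)|} a_{v+e_k}], every [w] in [L_(m+1)] is
   [v + e_k] for exactly [|p(w)|] pairs [(v, k)], positivity counts do not drop
   along steps, and [|p(w)| alpha_{|p(w)|} <= 1]. Since [lambda_j] is nondecreasing
   in [j] (as [ln x <= x]) and [lambda_j <= t], the claim follows. *)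

Lemma big_tupleS (R : Type) (idx : R) (op : Monoid.com_law idx) (T : finType) n
    (F : n.+1.-tuple T -> R) :
  \big[op/idx]_(s : n.+1.-tuple T) F s
    = \big[op/idx]_(k : T) \big[op/idx]_(s : n.-tuple T) F [tuple of k :: s].
Proof.
rewrite pair_bigA (reindex (fun p : T * n.-tuple T => [tuple of p.1 :: p.2])) //=.
exists (fun s : n.+1.-tuple T => (thead s, [tuple of behead s])).
  by move=> [k s] _ /=; rewrite theadE; congr pair; apply: val_inj.
by move=> s _ /=; rewrite [RHS]tuple_eta.
Qed.

Section Lattice.

Variable d : nat.
Implicit Types (u v w : pt d) (k : 'I_d.+1).

Lemma ptsum_step v k : ptsum (step v k) = (ptsum v).+1.
Proof.
rewrite /ptsum (eq_bigr (fun i => v i + (i == k))%N); last by move=> i _; rewrite ffunE.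
rewrite big_split /= -[(\sum_(i < d.+1) v i).+1]addn1; congr (_ + _)%N.
by rewrite (bigD1 k) //= eqxx big1 // => i /negbTE ->.
Qed.

Lemma step_inj k : injective (fun v : pt d => step v k).
Proof.
move=> v w /ffunP E; apply/ffunP => j.
by have := E j; rewrite !ffunE; apply: addIn.
Qed.

Lemma npos_le_dim v : (npos v <= d.+1)%N.
Proof. by rewrite /npos -[X in (_ <= X)%N]card_ord max_card. Qed.

Lemma npos_step v k : (npos v <= npos (step v k))%N.
Proof.
apply: subset_leq_card; apply/fintype.subsetP => j; rewrite !inE ffunE => vj_gt0.
exact: leq_trans vj_gt0 (leq_addr _ _).
Qed.

Lemma npos_step_gt0 v k : (0 < npos (step v k))%N.
Proof. by rewrite /npos card_gt0; apply/set0Pn; exists k; rewrite inE ffunE eqxx addn1. Qed.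

Lemma mem_level m u : (u \in level d m) = (ptsum u == m).
Proof.
apply/mapP/eqP => [[f] | sum_u].
  rewrite mem_filter => /andP[/eqP sum_f _] ->.
  by rewrite /ptsum; under eq_bigr do rewrite ffunE.
have u_le k : (u k < m.+1)%N.
  by rewrite ltnS -sum_u /ptsum (bigD1 k) //= leq_addr.
exists [ffun k => (inord (u k) : 'I_m.+1)].
  rewrite mem_filter mem_enum andbT -[X in _ == X]sum_u.
  by apply/eqP/eq_bigr => k _; rewrite ffunE inordK.
by apply/ffunP => k; rewrite !ffunE inordK.
Qed.

Lemma uniq_level m : uniq (level d m).
Proof.
rewrite map_inj_uniq ?filter_uniq -?enumT ?enum_uniq // => f g /ffunP E.
by apply/ffunP => k; apply: val_inj; have := E k; rewrite !ffunE.
Qed.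

Lemma perm_level_step m k :
  perm_eq (map (fun v => step v k) (level d m))
          [seq w : pt d <- level d m.+1 | (0 < w k)%N].
Proof.
apply: uniq_perm; rewrite ?filter_uniq ?(map_inj_uniq (@step_inj k)) ?uniq_level //.
move=> w; rewrite mem_filter; apply/mapP/andP => [[v v_m ->] | [wk_gt0 w_m1]].
  rewrite mem_level in v_m.
  by rewrite mem_level ptsum_step (eqP v_m) ffunE eqxx addn1.
set v := [ffun j => (w j - (j == k))%N].
have step_v : step v k = w.
  by apply/ffunP => j; rewrite !ffunE; case: eqP => [->|_]; rewrite ?subnK ?subn0 ?addn0.
exists v => //.
by rewrite mem_level -eqSS -(ptsum_step _ k) step_v -mem_level.
Qed.

End Lattice.

Section Extension.

Variables (R : nzRingType) (d : nat) (alpha : nat -> R).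
Implicit Types (u v : pt d) (a : pt d -> R).

Lemma pathw_cons v k s :
  pathw alpha v (k :: s) = alpha (npos (step v k)) * pathw alpha (step v k) s.
Proof. by rewrite /pathw big_ord_recl /= take0. Qed.

Lemma pw_first_step v u : (ptsum v < ptsum u)%N ->
  pw alpha v u = \sum_k alpha (npos (step v k)) * pw alpha (step v k) u.
Proof.
move=> lt_vu; rewrite /pw.
have -> : (ptsum u - ptsum v = (ptsum u - ptsum v).-1.+1)%N.
  by rewrite prednK // subn_gt0.
rewrite big_mkcond big_tupleS; apply: eq_bigr => k _.
rewrite ptsum_step subnS big_distrr [RHS]big_mkcond; apply: eq_bigr => s _ /=.
by rewrite pathw_cons; case: ifP; rewrite ?mulr0.
Qed.

Lemma ext_first_step t a v : (ptsum v < t)%N ->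
  ext alpha t a v = \sum_k alpha (npos (step v k)) * ext alpha t a (step v k).
Proof.
move=> lt_vt; rewrite /ext.
under [RHS]eq_bigr do rewrite big_distrr.
rewrite exchange_big /= big_seq [RHS]big_seq; apply: eq_bigr => u.
rewrite mem_level => /eqP sum_u.
by rewrite pw_first_step ?sum_u // big_distrl; apply: eq_bigr => k _; rewrite mulrA.
Qed.

End Extension.

Section LevelMass.

Variables (R : numDomainType) (d : nat) (alpha : nat -> R) (t : nat) (a : pt d -> R).
Hypothesis alpha_ge0 : forall q, (1 <= q <= d.+1)%N -> 0 <= alpha q.
Hypothesis alpha_mulr_le1 : forall q, (1 <= q <= d.+1)%N -> alpha q * q%:R <= 1.

Definition level_mass i m :=
  \sum_(v <- level d m | (i <= npos v)%N) `|ext alpha t a v|.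

Let mass_at (w : pt d) := alpha (npos w) * `|ext alpha t a w|.

Let mass_at_step_ge0 v k : 0 <= mass_at (step v k).
Proof. by rewrite mulr_ge0 // alpha_ge0 // npos_step_gt0 npos_le_dim. Qed.

Lemma level_mass_le_succ i m : (1 <= i)%N -> (m < t)%N ->
  level_mass i m <= level_mass i m.+1.
Proof.
move=> i_gt0 lt_mt.
have split_steps : level_mass i m
    <= \sum_k \sum_(v <- level d m | (i <= npos v)%N) mass_at (step v k).
  rewrite /level_mass exchange_big big_seq_cond [X in _ <= X]big_seq_cond.
  apply: ler_sum => v /andP[v_m _].
  rewrite ext_first_step; last by rewrite mem_level in v_m; rewrite (eqP v_m).
  apply: le_trans (ler_norm_sum _ _ _) _; apply: ler_sum => k _.
  by rewrite normrM ger0_norm // alpha_ge0 // npos_step_gt0 npos_le_dim.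
have gather_steps k : \sum_(v <- level d m | (i <= npos v)%N) mass_at (step v k)
    <= \sum_(w <- level d m.+1 | (i <= npos w)%N) (if (0 < w k)%N then mass_at w else 0).
  apply: (@le_trans _ _ (\sum_(v <- level d m | (i <= npos (step v k))%N)
                           mass_at (step v k))).
    rewrite big_mkcond [X in _ <= X]big_mkcond; apply: ler_sum => v _.
    case: ifP => [i_le|_]; last by case: ifP => // _; apply: mass_at_step_ge0.
    by rewrite (leq_trans i_le (npos_step v k)).
  rewrite -(big_map (fun v => step v k) (fun w => i <= npos w)%N mass_at).
  rewrite (perm_big _ (perm_level_step m k)) big_filter_cond -big_mkcondr.
  by under eq_bigl do rewrite andbC.
apply: le_trans split_steps (le_trans (ler_sum _ (fun k _ => gather_steps k)) _).
rewrite exchange_big big_seq_cond [X in _ <= X]big_seq_cond.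
apply: ler_sum => w /andP[_ i_le]; rewrite -big_mkcond sumr_const.
have -> : #|[pred k | (0 < w k)%N]| = npos w by rewrite /npos cardsE.
have npos_w : (1 <= npos w <= d.+1)%N by rewrite (leq_trans i_gt0 i_le) npos_le_dim.
by rewrite /mass_at -mulr_natr mulrAC ler_piMl // alpha_mulr_le1.
Qed.

Lemma level_mass_mono i m n : (1 <= i)%N -> (m <= n <= t)%N ->
  level_mass i m <= level_mass i n.
Proof.
move=> i_gt0 /andP[le_mn le_nt]; rewrite -(subnKC le_mn) in le_nt *.
elim: (n - m)%N le_nt => [|l IH] le_t; first by rewrite addn0.
have lt_t : (m + l < t)%N by rewrite -addnS.
by rewrite addnS (le_trans (IH (ltnW lt_t))) // level_mass_le_succ.
Qed.

End LevelMass.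

Lemma truncn_ln_le (R : realType) (x : R) : (Num.truncn (ln x) <= Num.truncn x)%N.
Proof.
have [x_le0 | x_gt0] := lerP x 0; first by rewrite ln0 // truncn0.
apply: le_truncn; have := expR_ge1Dx (ln x); rewrite lnK ?posrE //.
by apply: le_trans; rewrite lerDr.
Qed.

Lemma truncn_iter_ln_le (R : realType) (x : R) k n : (k <= n)%N ->
  (Num.truncn (iter n (@ln R) x) <= Num.truncn (iter k (@ln R) x))%N.
Proof.
move/subnKC <-; elim: (n - k)%N => [|l IH]; first by rewrite addn0.
by rewrite addnS iterS (leq_trans (truncn_ln_le _) IH).
Qed.

Theorem mainTheorem9 (R : realType) (d : nat) (alpha : nat -> R) (t : nat)
    (a : pt d -> R) :
  (1 <= d)%N ->
  (forall i : nat, (1 <= i <= d.+1)%N -> 0 < alpha i /\ alpha i <= (i%:R)^-1) ->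
  iter (5 * d + 4) (@expR R) 1 < t%:R ->
  forall i j1 j2 : nat,
    (1 <= i <= d.+1)%N -> (1 <= j1)%N -> (j1 < j2)%N -> (j2 <= d.+1)%N ->
    \sum_(u <- level d (lam R d t j1) | (i <= npos u)%N) `|ext alpha t a u|
      <= \sum_(u <- level d (lam R d t j2) | (i <= npos u)%N) `|ext alpha t a u|.
Proof.
move=> _ alpha_bound _ i j1 j2 /andP[i_gt0 _] _ lt_j12 _.
have alpha_ge0 q : (1 <= q <= d.+1)%N -> 0 <= alpha q.
  by move/alpha_bound => [/ltW].
have alpha_mulr_le1 q : (1 <= q <= d.+1)%N -> alpha q * q%:R <= 1.
  move=> q_range; have [_] := alpha_bound q q_range.
  by case/andP: q_range => q_gt0 _; rewrite -ler_pdivlMr ?ltr0n // div1r.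
have lam_le : (lam R d t j1 <= lam R d t j2)%N.
  by apply: truncn_iter_ln_le; rewrite leq_sub2l // leq_mul2l /= ltnW.
have lam_le_t : (lam R d t j2 <= t)%N.
  by rewrite /lam (leq_trans (truncn_iter_ln_le _ (leq0n _))) //= truncn_le_nat ltr_nat.
have lam_range : (lam R d t j1 <= lam R d t j2 <= t)%N by rewrite lam_le.
change (level_mass alpha t a i (lam R d t j1) <= level_mass alpha t a i (lam R d t j2)).
exact: (level_mass_mono a alpha_ge0 alpha_mulr_le1 i_gt0 lam_range).
Qed.
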